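(* Let $\Gamma\curvearrowright X, I$ be a stratified dynamical ideal with permutation model $W[[X]]$. Then in $W[[X]]$, every set is either a countable union of finite sets or contains an injective image of $\omega$.
   Context: Work in ZFC. $V[[X]]$ is the well-founded model of ZFCA with set of atoms exactly $X$ in which every set of elements is represented by an element; a group action of $\Gamma$ on $X$ extends to $V[[X]]$ by $\gamma\cdot A=\{\gamma\cdot B:B\in A\}$. $\mathrm{stab}(A)=\{\gamma:\gamma\cdot A=A\}$, $\mathrm{pstab}(a)=\{\gamma:\gamma\cdot B=B\ \forall B\in a\}$. A dynamical ideal $\Gamma\curvearrowright X, I$: a group $\Gamma$ acting on $X$ and a $\Gamma$-invariant ideal $I$ on $X$ containing all singletons. Its permutation model $W[[X]]$ is the class of $A\in V[[X]]$ such that $A$ and every element of its transitive closure are symmetric, where $A$ is symmetric if $\mathrm{pstab}(b)\subseteq\mathrm{stab}(A)$ for some $b\in I$. The dynamical ideal is stratified if there are $\Gamma$-invariant ideals $I_n$ ($n\in\omega$) on $X$ such that (1) $I_0\subseteq I_1\subseteq\cdots$ and $I=\bigcup_n I_n$; (2) for every $n$ and all sets $a$ and $b_m$ ($m\in\omega$) in $I_n$ there are $\gamma_m\in\mathrm{pstab}(a)$ with $\bigcup_m\gamma_m\cdot b_m\in I_{n+1}$. *)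

(* Well-founded sets with atoms (Aczel-style model of ZFCA over
   a type of atoms X), group actions, dynamical ideals, permutation models. *)
From Stdlib Require Import Arith.

Set Implicit Arguments.

Record GroupAction (X : Type) := {
  Gam : Type;
  gmul : Gam -> Gam -> Gam;
  gone : Gam;
  ginv : Gam -> Gam;
  gmul_assoc : forall a b c, gmul a (gmul b c) = gmul (gmul a b) c;
  gmul_1l : forall a, gmul gone a = a;
  gmul_Vl : forall a, gmul (ginv a) a = gone;
  act : Gam -> X -> X;
  act_one : forall x, act gone x = x;
  act_mul : forall g h x, act (gmul g h) x = act g (act h x)
}.

Inductive VA (X : Type) : Type :=
| Atom : X -> VA X
| SetOf : forall I : Type, (I -> VA X) -> VA X.

Arguments Atom {X} _.
Arguments SetOf {X} I _.

Section VAtheory.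
Variable X : Type.

Fixpoint veq (a b : VA X) {struct a} : Prop :=
  match a, b with
  | Atom x, Atom y => x = y
  | SetOf I0 f, SetOf J0 g =>
      (forall i, exists j, veq (f i) (g j)) /\ (forall j, exists i, veq (f i) (g j))
  | _, _ => False
  end.

Definition vmem (z A : VA X) : Prop :=
  match A with
  | Atom _ => False
  | SetOf I0 f => exists i, veq z (f i)
  end.

Definition isSet (A : VA X) : Prop :=
  match A with Atom _ => False | SetOf _ _ => True end.

Definition vpair (a b : VA X) : VA X := SetOf bool (fun t => if t then a else b).
Definition vopair (a b : VA X) : VA X := vpair (vpair a a) (vpair a b).

Definition vsucc (A : VA X) : VA X :=
  match A with
  | Atom x => Atom x
  | SetOf I0 f => SetOf (option I0) (fun o => match o with Some i => f i | None => SetOf I0 f end)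
  end.

Fixpoint vnat (n : nat) : VA X :=
  match n with
  | 0 => SetOf Empty_set (fun e => match e with end)
  | S n => vsucc (vnat n)
  end.

Definition vomega : VA X := SetOf nat vnat.

Definition vgraph_fin (k : nat) (F : nat -> VA X) : VA X :=
  SetOf {i : nat | i < k} (fun i => vopair (vnat (proj1_sig i)) (F (proj1_sig i))).

Definition vgraph_omega (F : nat -> VA X) : VA X :=
  SetOf nat (fun n => vopair (vnat n) (F n)).

End VAtheory.

Arguments veq {X} _ _.
Arguments vmem {X} _ _.
Arguments isSet {X} _.
Arguments vnat {X} _.
Arguments vomega {X}.

Section Action.
Variable X : Type.
Variable GA : GroupAction X.

Fixpoint actV (g : Gam GA) (A : VA X) : VA X :=
  match A with
  | Atom x => Atom (act GA g x)
  | SetOf I0 f => SetOf I0 (fun i => actV g (f i))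
  end.

Definition stab (A : VA X) (g : Gam GA) : Prop := veq (actV g A) A.

Definition pstab (b : X -> Prop) (g : Gam GA) : Prop :=
  forall x, b x -> act GA g x = x.

Definition img (g : Gam GA) (b : X -> Prop) : X -> Prop :=
  fun x => exists y, b y /\ act GA g y = x.

Definition is_ideal (I : (X -> Prop) -> Prop) : Prop :=
  I (fun _ => False) /\
  (forall a b, I b -> (forall x, a x -> b x) -> I a) /\
  (forall a b, I a -> I b -> I (fun x => a x \/ b x)).

Definition invariant_ideal (I : (X -> Prop) -> Prop) : Prop :=
  is_ideal I /\ forall g b, I b -> I (img g b).

Definition dynamical_ideal (I : (X -> Prop) -> Prop) : Prop :=
  invariant_ideal I /\ forall x0, I (fun x => x = x0).

Definition stratified (I : (X -> Prop) -> Prop) : Prop :=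
  exists In : nat -> (X -> Prop) -> Prop,
    (forall n, invariant_ideal (In n)) /\
    (forall n b, In n b -> In (S n) b) /\
    (forall b, I b <-> exists n, In n b) /\
    (forall n (a : X -> Prop) (bs : nat -> X -> Prop),
        In n a -> (forall m, In n (bs m)) ->
        exists gs : nat -> Gam GA,
          (forall m, pstab a (gs m)) /\
          In (S n) (fun x => exists m, img (gs m) (bs m) x)).

Definition symmetric (I : (X -> Prop) -> Prop) (A : VA X) : Prop :=
  exists b, I b /\ forall g, pstab b g -> stab A g.

Fixpoint inW (I : (X -> Prop) -> Prop) (A : VA X) : Prop :=
  match A with
  | Atom x => symmetric I (Atom x)
  | SetOf J f => symmetric I (SetOf J f) /\ forall j, inW I (f j)
  end.

(* "B is finite" evaluated in W[[X]]: a bijection from some natural k onto B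
   that belongs to W[[X]] *)
Definition finite_in_W (I : (X -> Prop) -> Prop) (B : VA X) : Prop :=
  exists (k : nat) (h : nat -> VA X),
    inW I (vgraph_fin k h) /\
    (forall i j, i < k -> j < k -> veq (h i) (h j) -> i = j) /\
    veq B (SetOf {i : nat | i < k} (fun i => h (proj1_sig i))).

(* "A is a countable union of finite sets" evaluated in W[[X]]:
   a function F in W[[X]] with domain omega, all of whose values are finite
   in W[[X]], whose union is A *)
Definition ctbl_union_finite_in_W (I : (X -> Prop) -> Prop) (A : VA X) : Prop :=
  exists F : nat -> VA X,
    inW I (vgraph_omega F) /\
    (forall n, finite_in_W I (F n)) /\
    (forall z, vmem z A <-> exists n, vmem z (F n)).

(* "A contains an injective image of omega" evaluated in W[[X]]:
   an injection omega -> A belonging to W[[X]] *)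
Definition contains_omega_in_W (I : (X -> Prop) -> Prop) (A : VA X) : Prop :=
  exists G : nat -> VA X,
    inW I (vgraph_omega G) /\
    (forall n m, veq (G n) (G m) -> n = m) /\
    (forall n, vmem (G n) A).

End Action.

From Stdlib Require Import Classical ClassicalEpsilon List Lia.

Set Implicit Arguments.
Unset Strict Implicit.

(* Let a in I support A, and let A_k be the set of elements of A that have a
   support in I_k.  Since every I_k is invariant, each A_k is fixed by
   pstab(a), so the sequence (A_k) lies in W[[X]] and A is its union.  If every
   A_k is finite, A is a countable union of finite sets.  Otherwise some A_k
   contains, for every N, N distinct elements with a common support b_N in I_k;
   stratification provides gamma_N in pstab(a), which fixes A, such that all
   gamma_N . b_N lie in one c in I.  Hence the elements of A supported by c form
   an infinite set, and any injective enumeration of it is fixed by pstab(c). *)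

Section Distinct.

Variables (T : Type) (E : T -> T -> Prop).
Hypothesis E_sym : forall x y, E x y -> E y x.
Hypothesis E_trans : forall x y z, E x y -> E y z -> E x z.

Definition distinct (l : list T) : Prop := ForallOrdPairs (fun x y => ~ E x y) l.

Definition covers (P : T -> Prop) (l : list T) : Prop :=
  forall x, P x -> exists y, In y l /\ E x y.

Definition finitely_covered (P : T -> Prop) : Prop := exists l, covers P l.

Lemma distinct_nth l d i j :
  distinct l -> i < length l -> j < length l -> E (nth i l d) (nth j l d) -> i = j.
Proof.
  revert i j; induction l as [|x l IH]; intros i j Hd Hi Hj Eij; simpl in *; [lia|].
  inversion Hd as [|? ? Hx Hl]; subst; rewrite Forall_forall in Hx.
  destruct i as [|i], j as [|j]; auto.
  - exfalso; apply (Hx (nth j l d)); [apply nth_In; lia|exact Eij].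
  - exfalso; apply (Hx (nth i l d)); [apply nth_In; lia|now apply E_sym].
  - f_equal; apply IH; auto; lia.
Qed.

Lemma distinct_map (phi : T -> T) l :
  (forall x y, E (phi x) (phi y) -> E x y) -> distinct l -> distinct (map phi l).
Proof.
  intros Hphi Hd; induction Hd as [|x l Hx Hl IH]; simpl; constructor; auto.
  apply Forall_map; eapply Forall_impl; [|exact Hx]; eauto.
Qed.

Lemma distinct_length_le l l' :
  distinct l -> (forall x, In x l -> exists y, In y l' /\ E x y) -> length l <= length l'.
Proof.
  revert l'; induction l as [|x l IH]; intros l' Hd Hc; simpl; [lia|].
  inversion Hd as [|? ? Hx Hl]; subst; rewrite Forall_forall in Hx.
  destruct (Hc x (or_introl eq_refl)) as [y [Hy Exy]].
  destruct (in_split _ _ Hy) as [l1 [l2 ->]].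
  enough (length l <= length (l1 ++ l2)) by (rewrite !length_app in *; simpl; lia).
  apply IH; auto. intros z Hz.
  destruct (Hc z (or_intror Hz)) as [w [Hw Ezw]].
  apply in_app_or in Hw as [Hw|[<-|Hw]].
  - exists w; split; [apply in_or_app|]; auto.
  - exfalso; apply (Hx z Hz); eauto.
  - exists w; split; [apply in_or_app|]; auto.
Qed.

Lemma fresh_of_not_covers P l :
  ~ covers P l -> exists x, P x /\ Forall (fun y => ~ E x y) l.
Proof.
  intro Hl; apply NNPP; intro Hno; apply Hl; intros x Px.
  apply NNPP; intro Hx; apply Hno; exists x; split; auto.
  apply Forall_forall; intros y Hy Exy; apply Hx; eauto.
Qed.

Lemma long_distinct_of_uncovered P :
  ~ finitely_covered P ->
  forall N, exists l, length l = N /\ distinct l /\ Forall P l.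
Proof.
  intros Hun N; induction N as [|N [l [Hl [Hd HP]]]].
  - exists nil; repeat constructor.
  - destruct (@fresh_of_not_covers P l) as [x [Px Hx]]; [intro Hc; apply Hun; now exists l|].
    exists (x :: l); repeat split; simpl; auto; now constructor.
Qed.

Lemma uncovered_of_long_distinct P :
  (forall N, exists l, length l = N /\ distinct l /\ Forall P l) -> ~ finitely_covered P.
Proof.
  intros Hlong [l Hc].
  destruct (Hlong (S (length l))) as [l' [Hl' [Hd HP]]].
  enough (length l' <= length l) by lia.
  apply distinct_length_le; auto.
  intros x Hx; apply Hc; now apply (Forall_forall P l').
Qed.

Lemma injective_seq_of_uncovered P :
  ~ finitely_covered P ->
  exists s : nat -> T, (forall n, P (s n)) /\ (forall n m, E (s n) (s m) -> n = m).
Proof.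
  intro Hun.
  assert (Hfresh : forall l, exists x, P x /\ Forall (fun y => ~ E x y) l).
  { intro l; apply fresh_of_not_covers; intro Hc; apply Hun; now exists l. }
  destruct (choice _ Hfresh) as [fresh Hf].
  pose (prefix := fix prefix n := match n with 0 => nil | S n => fresh (prefix n) :: prefix n end).
  assert (Hprefix : forall n m, n < m -> In (fresh (prefix n)) (prefix m)).
  { intros n m; induction m as [|m IH]; intro Hnm; [lia|]; simpl.
    destruct (PeanoNat.Nat.eq_dec n m) as [->|Hne]; [now left|right; apply IH; lia]. }
  assert (Hnew : forall n m, n < m -> ~ E (fresh (prefix m)) (fresh (prefix n))).
  { intros n m Hnm; apply (proj1 (Forall_forall _ _) (proj2 (Hf (prefix m)))); auto. }
  exists (fun n => fresh (prefix n)); split; [intro n; apply Hf|].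
  intros n m Enm; destruct (PeanoNat.Nat.lt_total n m) as [Hlt|[Heq|Hgt]]; auto; exfalso.
  - now apply (Hnew n m Hlt), E_sym.
  - exact (Hnew m n Hgt Enm).
Qed.

Lemma distinct_cover_of_covered P :
  finitely_covered P -> exists l, distinct l /\ Forall P l /\ covers P l.
Proof.
  intros [l0 Hc].
  enough (Hred : exists l, distinct l /\ Forall P l /\
    forall x, P x -> (exists y, In y l0 /\ E x y) -> exists y, In y l /\ E x y).
  { destruct Hred as [l [Hd [HP Hl]]]; exists l; repeat split; auto.
    intros x Px; now apply Hl, Hc. }
  clear Hc; induction l0 as [|y0 l0 [l [Hd [HP Hl]]]].
  - exists nil; split; [constructor|split; [constructor|]]. intros x _ [y [[] _]].
  - destruct (classic (exists x, P x /\ E x y0 /\ Forall (fun y => ~ E x y) l))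
      as [[x [Px [Ex Hx]]]|Hno].
    + exists (x :: l); repeat split; try now constructor.
      intros z Pz [y [[<-|Hy] Ezy]].
      * exists x; split; [now left|eauto].
      * destruct (Hl z Pz) as [w [Hw Ezw]]; [now exists y|]. exists w; split; [now right|auto].
    + exists l; repeat split; auto.
      intros z Pz [y [[<-|Hy] Ezy]]; [|now apply Hl; eauto].
      apply NNPP; intro Hz; apply Hno; exists z; repeat split; auto.
      apply Forall_forall; intros w Hw Ezw; apply Hz; eauto.
Qed.

End Distinct.

Section ExtensionalEquality.

Variable X : Type.

Lemma veq_refl (a : VA X) : veq a a.
Proof. induction a as [x|I0 f IH]; simpl; auto. split; intro i; exists i; apply IH. Qed.

Lemma veq_sym (a b : VA X) : veq a b -> veq b a.
Proof.
  revert b; induction a as [x|I0 f IH]; destruct b as [y|J0 g]; simpl; try tauto;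
    [congruence|].
  intros [H1 H2]; split.
  - intro j; destruct (H2 j) as [i Hi]; exists i; apply IH; auto.
  - intro i; destruct (H1 i) as [j Hj]; exists j; apply IH; auto.
Qed.

Lemma veq_trans (a b c : VA X) : veq a b -> veq b c -> veq a c.
Proof.
  revert b c; induction a as [x|I0 f IH]; destruct b as [y|J0 g]; destruct c as [z|K0 h];
    simpl; try tauto; [congruence|].
  intros [H1 H2] [H3 H4]; split.
  - intro i; destruct (H1 i) as [j Hj]; destruct (H3 j) as [k Hk]; exists k; eauto.
  - intro k; destruct (H4 k) as [j Hj]; destruct (H2 j) as [i Hi]; exists i; eauto.
Qed.

Fixpoint pure (a : VA X) : Prop :=
  match a with Atom _ => False | SetOf _ f => forall i, pure (f i) end.

Lemma pure_vnat n : pure (@vnat X n).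
Proof.
  induction n as [|n IH]; simpl; [intros []|].
  destruct (@vnat X n); simpl in *; [tauto|]. intros [i|]; auto.
Qed.

End ExtensionalEquality.

Arguments veq_sym {X} a b.
Arguments veq_trans {X} a b c.

Section Action.

Variables (X : Type) (GA : GroupAction X).

Lemma gmul_Vr g : gmul GA g (ginv GA g) = gone GA.
Proof.
  set (h := ginv GA g).
  rewrite <- (gmul_1l GA (gmul GA g h)), <- (gmul_Vl GA h) at 1.
  rewrite <- gmul_assoc, (gmul_assoc GA h g h).
  unfold h at 2; rewrite gmul_Vl, gmul_1l; apply gmul_Vl.
Qed.

Lemma act_inv_l g x : act GA (ginv GA g) (act GA g x) = x.
Proof. rewrite <- act_mul, gmul_Vl; apply act_one. Qed.

Lemma pstab_inv e g : pstab GA e g -> pstab GA e (ginv GA g).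
Proof. intros H x Hx; rewrite <- (H x Hx) at 1; apply act_inv_l. Qed.

Lemma actV_veq g a b : veq a b -> veq (actV GA g a) (actV GA g b).
Proof.
  revert b; induction a as [x|I0 f IH]; destruct b as [y|J0 h]; simpl; try tauto.
  - intros ->; reflexivity.
  - intros [H1 H2]; split.
    + intro i; destruct (H1 i) as [j Hj]; exists j; auto.
    + intro j; destruct (H2 j) as [i Hi]; exists i; auto.
Qed.

Lemma actV_mul g h a : veq (actV GA (gmul GA g h) a) (actV GA g (actV GA h a)).
Proof.
  induction a as [x|I0 f IH]; simpl; [apply act_mul|].
  split; intro i; exists i; apply IH.
Qed.

Lemma actV_one a : veq (actV GA (gone GA) a) a.
Proof.
  induction a as [x|I0 f IH]; simpl; [apply act_one|].
  split; intro i; exists i; apply IH.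
Qed.

Lemma actV_inv_l g a : veq (actV GA (ginv GA g) (actV GA g a)) a.
Proof.
  eapply veq_trans; [apply veq_sym, actV_mul|]. rewrite gmul_Vl; apply actV_one.
Qed.

Lemma actV_inv_r g a : veq (actV GA g (actV GA (ginv GA g) a)) a.
Proof.
  eapply veq_trans; [apply veq_sym, actV_mul|]. rewrite gmul_Vr; apply actV_one.
Qed.

Lemma actV_inj g a b : veq (actV GA g a) (actV GA g b) -> veq a b.
Proof.
  intro H; apply (actV_veq (ginv GA g)) in H.
  eapply veq_trans; [apply veq_sym, actV_inv_l|].
  eapply veq_trans; [exact H|apply actV_inv_l].
Qed.

Lemma stab_SetOf I0 (f : I0 -> VA X) g :
  (forall i, stab GA (f i) g) -> stab GA (SetOf I0 f) g.
Proof. intro H; split; intro i; exists i; apply H. Qed.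

Lemma stab_vopair a b g : stab GA a g -> stab GA b g -> stab GA (vopair a b) g.
Proof. intros Ha Hb; do 2 (apply stab_SetOf; intros []); auto. Qed.

Lemma stab_pure a g : pure a -> stab GA a g.
Proof.
  induction a as [x|I0 f IH]; simpl; [tauto|].
  intro H; apply stab_SetOf; intro i; apply IH, H.
Qed.

Lemma stab_vmem B g y : stab GA B g -> vmem y B -> vmem (actV GA g y) B.
Proof.
  destruct B as [x|K h]; simpl; [tauto|].
  intros [Hg _] [k Ek]; destruct (Hg k) as [k' Ek'].
  exists k'; eapply veq_trans; [apply actV_veq, Ek|exact Ek'].
Qed.

Lemma stab_of_vmem K (h : K -> VA X) g :
  (forall y, vmem y (SetOf K h) -> vmem (actV GA g y) (SetOf K h)) ->
  (forall y, vmem y (SetOf K h) -> vmem (actV GA (ginv GA g) y) (SetOf K h)) ->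
  stab GA (SetOf K h) g.
Proof.
  intros Hg Hginv; split.
  - intro k; apply Hg; exists k; apply veq_refl.
  - intro k'; destruct (Hginv (h k')) as [k Ek]; [exists k'; apply veq_refl|].
    exists k; eapply veq_trans; [apply actV_veq, veq_sym, Ek|apply actV_inv_r].
Qed.

Definition supports (e : X -> Prop) (y : VA X) : Prop :=
  forall g, pstab GA e g -> stab GA y g.

Lemma supports_veq e y y' : veq y y' -> supports e y -> supports e y'.
Proof.
  intros E Hy g Hg; unfold stab.
  eapply veq_trans; [apply actV_veq, veq_sym, E|].
  eapply veq_trans; [apply Hy, Hg|exact E].
Qed.

Lemma supports_mono (e e' : X -> Prop) y :
  (forall x, e x -> e' x) -> supports e y -> supports e' y.
Proof. intros He Hy g Hg; apply Hy; intros x Hx; apply Hg, He, Hx. Qed.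

(* [h] fixes [img g e] pointwise iff [g^-1 h g] fixes [e] pointwise. *)
Lemma supports_img e y g : supports e y -> supports (img GA g e) (actV GA g y).
Proof.
  intros Hy h Hh; unfold stab.
  set (h' := gmul GA (ginv GA g) (gmul GA h g)).
  assert (Hh' : pstab GA e h').
  { intros x Hx; unfold h'; rewrite !act_mul.
    rewrite (Hh (act GA g x)) by (exists x; auto). apply act_inv_l. }
  assert (E : gmul GA h g = gmul GA g h').
  { unfold h'; rewrite gmul_assoc, gmul_Vr, gmul_1l; reflexivity. }
  eapply veq_trans; [apply veq_sym, actV_mul|]; rewrite E.
  eapply veq_trans; [apply actV_mul|]; apply actV_veq, Hy, Hh'.
Qed.

Lemma symmetric_veq J y y' : veq y y' -> symmetric GA J y -> symmetric GA J y'.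
Proof. intros E [e [Je He]]; exists e; split; auto; eapply supports_veq; eauto. Qed.

Lemma symmetric_actV J g y :
  invariant_ideal GA J -> symmetric GA J y -> symmetric GA J (actV GA g y).
Proof.
  intros [_ HJ] [e [Je He]]; exists (img GA g e); split; auto.
  now apply supports_img.
Qed.

Lemma symmetric_list J (l : list (VA X)) :
  is_ideal J -> (forall y, In y l -> symmetric GA J y) ->
  exists e, J e /\ forall y, In y l -> supports e y.
Proof.
  intros [J0 [_ JU]]; induction l as [|y l IH]; intro Hl.
  - exists (fun _ => False); split; auto; intros y [].
  - destruct (Hl y (or_introl eq_refl)) as [e [Je He]].
    destruct IH as [e' [Je' He']]; [intros z Hz; apply Hl; now right|].
    exists (fun x => e x \/ e' x); split; [now apply JU|].
    intros z [<-|Hz].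
    + apply supports_mono with e; [tauto|exact He].
    + apply supports_mono with e'; [tauto|now apply He'].
Qed.

End Action.

Section PermutationModel.

Variables (X : Type) (GA : GroupAction X) (I : (X -> Prop) -> Prop).
Hypothesis I_ideal : is_ideal I.

Lemma inW_symmetric a : inW GA I a -> symmetric GA I a.
Proof. destruct a; simpl; tauto. Qed.

Lemma inW_veq a b : veq a b -> inW GA I a -> inW GA I b.
Proof.
  revert b; induction a as [x|I0 f IH]; intros [y|J0 g] E Ha; try (simpl in E; contradiction).
  - simpl in E; now subst.
  - destruct Ha as [Hs Hf]; split; [exact (symmetric_veq E Hs)|].
    intro j; destruct (proj2 E j) as [i Ei]; exact (IH i _ Ei (Hf i)).
Qed.

Lemma inW_vmem B y : inW GA I B -> vmem y B -> inW GA I y.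
Proof.
  destruct B as [x|K h]; simpl; [tauto|].
  intros [_ Hh] [k Ek]; eapply inW_veq; [apply veq_sym, Ek|apply Hh].
Qed.

Lemma inW_pure a : pure a -> inW GA I a.
Proof.
  induction a as [x|I0 f IH]; simpl; [tauto|]; intro Hp; split; [|intro; apply IH, Hp].
  exists (fun _ => False); split; [apply I_ideal|]; intros g _; apply stab_pure; exact Hp.
Qed.

Lemma inW_vpair a b : inW GA I a -> inW GA I b -> inW GA I (vpair a b).
Proof.
  intros Ha Hb; split; [|intros []; auto].
  destruct (symmetric_list (GA:=GA) (l:=a :: b :: nil) I_ideal) as [e [Ie He]].
  { intros y [<-|[<-|[]]]; now apply inW_symmetric. }
  exists e; split; auto; intros g Hg; apply stab_SetOf; intros [];
    apply He; simpl; auto.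
Qed.

Lemma inW_vopair a b : inW GA I a -> inW GA I b -> inW GA I (vopair a b).
Proof. intros; unfold vopair; repeat apply inW_vpair; auto. Qed.

Lemma inW_vgraph_fin e k F :
  I e -> (forall i, i < k -> supports GA e (F i)) -> (forall i, i < k -> inW GA I (F i)) ->
  inW GA I (vgraph_fin k F).
Proof.
  intros Ie Se HF; split.
  - exists e; split; auto; intros g Hg; apply stab_SetOf; intros [i Hi].
    apply stab_vopair; [apply stab_pure, pure_vnat|apply Se; auto].
  - intros [i Hi]; apply inW_vopair; [apply inW_pure, pure_vnat|auto].
Qed.

Lemma inW_vgraph_omega e F :
  I e -> (forall n, supports GA e (F n)) -> (forall n, inW GA I (F n)) ->
  inW GA I (vgraph_omega F).
Proof.
  intros Ie Se HF; split.
  - exists e; split; auto; intros g Hg; apply stab_SetOf; intro n.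
    apply stab_vopair; [apply stab_pure, pure_vnat|apply Se; auto].
  - intro n; apply inW_vopair; [apply inW_pure, pure_vnat|auto].
Qed.

Lemma finite_in_W_of_covered B :
  inW GA I B -> isSet B -> finitely_covered veq (fun y => vmem y B) -> finite_in_W GA I B.
Proof.
  intros HB HBset Hcov; destruct B as [x|K h]; [contradiction|].
  destruct (distinct_cover_of_covered veq_sym veq_trans Hcov) as [l [Hd [Hl Hc]]].
  rewrite Forall_forall in Hl.
  destruct (symmetric_list (GA:=GA) (l:=l) I_ideal) as [e [Ie He]].
  { intros y Hy; apply inW_symmetric, (inW_vmem (B:=SetOf K h)); auto. }
  exists (length l), (fun i => nth i l (vnat 0)); split; [|split].
  - apply inW_vgraph_fin with e; auto; intros i Hi.
    + apply He, nth_In, Hi.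
    + apply (inW_vmem (B:=SetOf K h)); auto; apply Hl, nth_In, Hi.
  - intros i j Hi Hj; apply (distinct_nth veq_sym); auto.
  - split.
    + intro k; destruct (Hc (h k)) as [y [Hy Ey]]; [exists k; apply veq_refl|].
      destruct (In_nth l y (vnat 0) Hy) as [i [Hi <-]]; now exists (exist _ i Hi).
    + intros [i Hi]; destruct (Hl (nth i l (vnat 0))) as [k Ek]; [apply nth_In, Hi|].
      exists k; apply veq_sym, Ek.
Qed.

End PermutationModel.

Section Strata.

Variables (X : Type) (GA : GroupAction X) (I : (X -> Prop) -> Prop).
Variable Ik : nat -> (X -> Prop) -> Prop.
Hypothesis I_ideal : is_ideal I.
Hypothesis Ik_inv : forall n, invariant_ideal GA (Ik n).
Hypothesis I_Ik : forall b, I b <-> exists n, Ik n b.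

Variables (J : Type) (f : J -> VA X).
Local Notation A := (SetOf J f).
Hypothesis A_W : inW GA I A.

Definition stratum (k : nat) : VA X :=
  SetOf {j : J | symmetric GA (Ik k) (f j)} (fun p => f (proj1_sig p)).

Lemma vmem_stratum k y : vmem y (stratum k) <-> vmem y A /\ symmetric GA (Ik k) y.
Proof.
  split.
  - intros [[j Hj] E]; split; [now exists j|].
    eapply symmetric_veq; [apply veq_sym, E|exact Hj].
  - intros [[j E] Hy]; exists (exist _ j (symmetric_veq E Hy)); exact E.
Qed.

Lemma vmem_strata y : vmem y A <-> exists k, vmem y (stratum k).
Proof.
  split.
  - intro Hy; destruct (inW_symmetric (inW_vmem A_W Hy)) as [e [Ie He]].
    destruct (proj1 (I_Ik e) Ie) as [k Hk].
    exists k; apply vmem_stratum; split; auto; now exists e.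
  - intros [k Hk]; apply (vmem_stratum k), Hk.
Qed.

Lemma supports_stratum a k : supports GA a A -> supports GA a (stratum k).
Proof.
  intros Ha g Hg.
  assert (Hmaps : forall h, stab GA A h -> forall y,
            vmem y (stratum k) -> vmem (actV GA h y) (stratum k)).
  { intros h Hh y Hy; apply vmem_stratum in Hy as [HyA Hy].
    apply vmem_stratum; split; [now apply stab_vmem|now apply symmetric_actV]. }
  apply stab_of_vmem; apply Hmaps, Ha; [exact Hg|now apply pstab_inv].
Qed.

Lemma inW_stratum k : inW GA I (stratum k).
Proof.
  pose proof A_W as [[a [Ia Ha]] Hf]; split; [|intro p; apply Hf].
  exists a; split; auto; now apply supports_stratum.
Qed.

Lemma ctbl_union_of_finite_strata :
  (forall k, finitely_covered veq (fun y => vmem y (stratum k))) -> ctbl_union_finite_in_W GA I A.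
Proof.
  intro Hfin; destruct (inW_symmetric A_W) as [a [Ia Ha]].
  exists stratum; split; [|split].
  - apply inW_vgraph_omega with a; auto; intro k; [now apply supports_stratum|apply inW_stratum].
  - intro k; apply finite_in_W_of_covered; auto; [apply inW_stratum|constructor].
  - apply vmem_strata.
Qed.

Hypothesis Ik_mono : forall n b, Ik n b -> Ik (S n) b.
Hypothesis Ik_strat :
  forall n (a : X -> Prop) (bs : nat -> X -> Prop),
    Ik n a -> (forall m, Ik n (bs m)) ->
    exists gs : nat -> Gam GA,
      (forall m, pstab GA a (gs m)) /\
      Ik (S n) (fun x => exists m, img GA (gs m) (bs m) x).

Lemma Ik_le n m b : n <= m -> Ik n b -> Ik m b.
Proof. intros Hle Hb; induction Hle; auto. Qed.

Lemma long_distinct_supported_of_infinite_stratum k :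
  ~ finitely_covered veq (fun y => vmem y (stratum k)) ->
  exists c, I c /\ forall N, exists l, length l = N /\ distinct veq l /\
    Forall (fun y => vmem y A /\ supports GA c y) l.
Proof.
  intro Hk; destruct (inW_symmetric A_W) as [a [Ia Ha]].
  destruct (proj1 (I_Ik a) Ia) as [n0 Ha0].
  assert (Hfam : forall N, exists lb : list (VA X) * (X -> Prop),
    length (fst lb) = N /\ distinct veq (fst lb) /\ Forall (fun y => vmem y A) (fst lb) /\
    Ik k (snd lb) /\ forall y, In y (fst lb) -> supports GA (snd lb) y).
  { intro N; destruct (long_distinct_of_uncovered Hk N) as [l [Hl [Hd HP]]].
    rewrite Forall_forall in HP.
    destruct (symmetric_list (GA:=GA) (l:=l) (proj1 (Ik_inv k))) as [b [Hb Sb]].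
    { intros y Hy; apply (vmem_stratum k), HP, Hy. }
    exists (l, b); repeat split; auto.
    apply Forall_forall; intros y Hy; apply (vmem_stratum k), HP, Hy. }
  destruct (choice _ Hfam) as [lb Hlb].
  destruct (@Ik_strat (n0 + k) a (fun N => snd (lb N))) as [gs [Hgs Hc]].
  { apply Ik_le with n0; [lia|exact Ha0]. }
  { intro N; apply Ik_le with k; [lia|apply Hlb]. }
  eexists; split; [apply I_Ik; eexists; exact Hc|].
  intro N; destruct (Hlb N) as [Hl [Hd [HA [_ Hsupp]]]].
  exists (map (actV GA (gs N)) (fst (lb N))); split; [|split].
  - now rewrite length_map.
  - apply distinct_map; auto; apply actV_inj.
  - rewrite Forall_forall in HA; apply Forall_map, Forall_forall; intros y Hy; split.
    + apply stab_vmem; [apply Ha, Hgs|apply HA, Hy].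
    + apply supports_mono with (img GA (gs N) (snd (lb N))); [intros x Hx; now exists N|].
      apply supports_img, Hsupp, Hy.
Qed.

Lemma omega_of_infinite_stratum k :
  ~ finitely_covered veq (fun y => vmem y (stratum k)) -> contains_omega_in_W GA I A.
Proof.
  intro Hk; destruct (long_distinct_supported_of_infinite_stratum Hk) as [c [Ic Hlong]].
  destruct (injective_seq_of_uncovered veq_sym (uncovered_of_long_distinct veq_sym veq_trans Hlong))
    as [s [Hs Hinj]].
  exists s; split; [|split; [exact Hinj|intro n; apply Hs]].
  apply inW_vgraph_omega with c; auto; intro n; [apply Hs|].
  apply inW_vmem with A; [exact A_W|apply Hs].
Qed.

End Strata.

Theorem mainTheorem19 (X : Type) (GA : GroupAction X) (I : (X -> Prop) -> Prop) :
  dynamical_ideal GA I ->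
  stratified GA I ->
  forall A : VA X, inW GA I A -> isSet A ->
    ctbl_union_finite_in_W GA I A \/ contains_omega_in_W GA I A.
Proof.
  intros [[I_ideal _] _] [Ik [Ik_inv [Ik_mono [I_Ik Ik_strat]]]] A HA HAset.
  destruct A as [x|J f]; [contradiction|].
  destruct (classic (forall k, finitely_covered veq (fun y => vmem y (stratum GA Ik f k))))
    as [Hfin|Hinf].
  - left; now apply ctbl_union_of_finite_strata with Ik.
  - right; apply not_all_ex_not in Hinf as [k Hk].
    now apply omega_of_infinite_stratum with Ik k.
Qed.
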